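(* Let $\mathfrak{M}=\{M^{(\alpha)}:\alpha>0\}$ be a non-quasianalytic weight matrix such that $\mu^{(\alpha)}\le\mu^{(\beta)}$ termwise whenever $\alpha\le\beta$, \[ \forall\alpha>0\ \exists\beta>0:\ \liminf_{k\to\infty}\frac{\mu^{(\beta)}_k}{k}\sum_{j\ge2k}\frac1{\mu^{(\alpha)}_j}>0, \] and \[ \forall\alpha>0\ \exists\beta>0\ \exists A\ge1\ \forall j\in\mathbb{N}:\ (\mu^{(\alpha)}_j)^2\le A\mu^{(\beta)}_{2j}. \] Then (i) $\forall\alpha>0\ \exists\beta>0:\ \liminf_{k\to\infty}\frac{\mu^{(\beta)}_k}{k}\sum_{j\ge k}\frac1{\mu^{(\alpha)}_j}>0$, and (ii) $\forall\alpha>0\ \exists\beta>0\ \exists A\ge1\ \forall j\in\mathbb{N}_{\ge1}:\ \sigma^{(\alpha)}_j\le A(S^{(\beta)}_j)^{1/j}$.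
   Context: A weight sequence is $M=(M_k)_{k\ge0}$ with $M_k=\mu_0\cdots\mu_k$, $1=\mu_0\le\mu_1\le\cdots$, $\mu_k\to\infty$; non-quasianalytic if $\sum1/\mu_k<\infty$; $\mu^{(\alpha)}_k=M^{(\alpha)}_k/M^{(\alpha)}_{k-1}$. A weight matrix is a family $\{M^{(\alpha)}:\alpha>0\}$ of weight sequences with $M^{(\alpha)}\le M^{(\beta)}$ for $\alpha\le\beta$; non-quasianalytic if all members are. The derived sequences: $S^{(\alpha)}_k=\sigma^{(\alpha)}_0\cdots\sigma^{(\alpha)}_k$ with $\sigma^{(\alpha)}_0=1$, $\sigma^{(\alpha)}_k=\tau^{(\alpha)}_1k/\tau^{(\alpha)}_k$ and $\tau^{(\alpha)}_k=k/\mu^{(\alpha)}_k+\sum_{\ell\ge k}1/\mu^{(\alpha)}_\ell$ for $k\ge1$. *)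

From Stdlib Require Import Reals Lra.
From Coquelicot Require Import Coquelicot.
Open Scope R_scope.

(* A weight sequence given through its quotients mu_k (k >= 0):
   mu_0 = 1, mu nondecreasing, mu_k -> +oo. *)
Definition weight_seq (mu : nat -> R) : Prop :=
  mu 0%nat = 1 /\ (forall k, mu k <= mu (S k)) /\ is_lim_seq mu p_infty.

Fixpoint Mseq (mu : nat -> R) (k : nat) : R :=
  match k with
  | O => mu O
  | S k' => Mseq mu k' * mu k
  end.

Definition nonquasianalytic (mu : nat -> R) : Prop :=
  ex_series (fun k => / mu k).

Definition weight_matrix (mu : R -> nat -> R) : Prop :=
  (forall a, 0 < a -> weight_seq (mu a)) /\
  (forall a b, 0 < a -> a <= b -> forall k, Mseq (mu a) k <= Mseq (mu b) k).

Definition nonquasianalytic_matrix (mu : R -> nat -> R) : Prop :=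
  forall a, 0 < a -> nonquasianalytic (mu a).

Definition tail_sum (mu : nat -> R) (k : nat) : R := Series (fun n => / mu (k + n)%nat).

Definition tau_w (mu : nat -> R) (k : nat) : R := INR k / mu k + tail_sum mu k.

Definition sigma_w (mu : nat -> R) (k : nat) : R :=
  match k with
  | O => 1
  | S _ => tau_w mu 1 * INR k / tau_w mu k
  end.

Fixpoint Sseq (mu : nat -> R) (k : nat) : R :=
  match k with
  | O => sigma_w mu O
  | S k' => Sseq mu k' * sigma_w mu k
  end.

(* The square condition makes the tails summable at double speed: pairing the terms
   of sum_{l >= 2m} 1/mu^(b)_l gives at most 2A/mu^(a)_m sum_{l >= m} 1/mu^(a)_l.
   Fed into the liminf condition this yields moderate growth across the matrix,
   mu^(a)_{2k} <= C mu^(b)_k, and fed into tau it gives tau^(b)_i = O(i / mu^(g)_i), i.e.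
   sigma^(b)_i >= c mu^(g)_i, whence S^(b)_j >= c^j M^(g)_j >= c^j (mu^(g)_h)^(j/2) with
   h = ceil(j/2).  On the other side sigma^(a)_j <= tau^(a)_1 mu^(a)_j, and
   (mu^(a)_j)^2 <= K mu^(g)_h by the square condition and moderate growth; comparing the
   two bounds gives (ii).  Part (i) is immediate because the tails decrease. *)

From Stdlib Require Import Reals Lra Lia.
From Coquelicot Require Import Coquelicot.
Open Scope R_scope.

Lemma sum_n_S (a : nat -> R) n : sum_n a (S n) = sum_n a n + a (S n).
Proof. exact (sum_Sn a n). Qed.

Lemma sum_n_le_add (a : nat -> R) N k :
  (forall n, 0 <= a n) -> sum_n a N <= sum_n a (N + k).
Proof.
  intros a_ge0; induction k as [|k IHk].
  - rewrite Nat.add_0_r; lra.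
  - rewrite Nat.add_succ_r, sum_n_S; specialize (a_ge0 (S (N + k))); lra.
Qed.

Lemma sum_n_le_Series (a : nat -> R) N :
  ex_series a -> (forall n, 0 <= a n) -> sum_n a N <= Series a.
Proof.
  intros a_ex a_ge0; apply is_lim_seq_incr_compare; [now apply Series_correct|].
  intros n; rewrite sum_n_S; specialize (a_ge0 (S n)); lra.
Qed.

Lemma sum_n_pairs (a : nat -> R) N :
  sum_n a (2 * N + 1) = sum_n (fun n => a (2 * n)%nat + a (2 * n + 1)%nat) N.
Proof.
  induction N as [|N IHN].
  - change (2 * 0 + 1)%nat with 1%nat; now rewrite sum_n_S, !sum_O.
  - replace (2 * S N + 1)%nat with (S (S (2 * N + 1))) by lia.
    rewrite !sum_n_S, IHN.
    replace (S (2 * N + 1)) with (2 * S N)%nat by lia.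
    replace (S (2 * S N)) with (2 * S N + 1)%nat by lia; apply Rplus_assoc.
Qed.

Lemma Series_le_twice_even (a b : nat -> R) :
  ex_series a -> ex_series b -> (forall n, 0 <= a n) -> (forall n, a (S n) <= a n) ->
  (forall n, a (2 * n)%nat <= b n) -> Series a <= 2 * Series b.
Proof.
  intros a_ex b_ex a_ge0 a_noninc a_le_b.
  assert (b_ge0 : forall n, 0 <= b n).
  { intros n; specialize (a_ge0 (2 * n)%nat); specialize (a_le_b n); lra. }
  assert (partial_le : forall N, sum_n a N <= 2 * Series b).
  { intros N.
    apply Rle_trans with (sum_n a (2 * N + 1)).
    { replace (2 * N + 1)%nat with (N + (N + 1))%nat by lia. now apply sum_n_le_add. }
    rewrite sum_n_pairs.
    apply Rle_trans with (sum_n (fun n => 2 * b n) N).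
    - apply sum_n_m_le; intros n.
      specialize (a_noninc (2 * n)%nat); specialize (a_le_b n).
      replace (2 * n + 1)%nat with (S (2 * n)) by lia; lra.
    - rewrite (sum_n_mult_l 2 b N : sum_n (fun n => 2 * b n) N = 2 * sum_n b N).
      apply Rmult_le_compat_l; [lra|].
      now apply sum_n_le_Series. }
  change (Rbar_le (Series a) (2 * Series b)).
  apply (is_lim_seq_le _ _ _ _ partial_le); [now apply Series_correct|apply is_lim_seq_const].
Qed.

Lemma LimInf_seq_gt0_eventually (u : nat -> R) :
  Rbar_lt 0 (LimInf_seq u) -> exists eps, 0 < eps /\ eventually (fun n => eps < u n).
Proof.
  destruct (ex_LimInf_seq u) as [l u_liminf].
  rewrite (is_LimInf_seq_unique _ _ u_liminf).
  destruct l as [r| |]; simpl; intros l_gt0;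
    [|exists 1; split; [lra|apply (u_liminf 1)]|contradiction].
  assert (half_gt0 : 0 < r / 2) by lra.
  destruct (u_liminf (mkposreal _ half_gt0)) as [_ [N u_above]].
  exists (r / 2); split; [lra|exists N].
  intros n n_ge; specialize (u_above n n_ge); simpl in u_above; lra.
Qed.

Lemma exists_half n : exists h, (n <= 2 * h <= n + 1)%nat.
Proof.
  exists (S n / 2)%nat.
  pose proof (Nat.div_mod (S n) 2 ltac:(lia)); pose proof (Nat.mod_upper_bound (S n) 2 ltac:(lia)).
  lia.
Qed.

Lemma le_mul_of_eventually_le (f g : nat -> R) C N :
  (forall k, (k <= N)%nat -> f k <= f N) -> 0 <= f N -> (forall k, 1 <= g k) ->
  (forall k, (N <= k)%nat -> f k <= C * g k) -> forall k, f k <= Rmax C (f N) * g k.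
Proof.
  intros f_le_N f_N_ge0 g_ge1 eventually_le k.
  pose proof (Rmax_l C (f N)); pose proof (Rmax_r C (f N)); pose proof (g_ge1 k).
  destruct (Compare_dec.le_lt_dec N k) as [N_le_k|k_lt_N].
  - specialize (eventually_le k N_le_k); nra.
  - specialize (f_le_N k ltac:(lia)); nra.
Qed.

Lemma le_mul_of_lt_ratio eps k P Q t D :
  0 < eps -> 1 <= k -> 0 < P -> 0 <= Q -> 0 <= t -> 0 <= D ->
  eps < Q / k * t -> P * t <= 2 * k + D -> P <= (2 + D) / eps * Q.
Proof.
  intros eps_gt0 k_ge1 P_gt0 Q_ge0 t_ge0 D_ge0 ratio_gt Pt_le.
  assert (eps * (k * P) < Q * (P * t)).
  { replace (Q * (P * t)) with (Q / k * t * (k * P)) by (field; lra).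
    apply Rmult_lt_compat_r; nra. }
  assert (Q * (P * t) <= Q * (2 * k + D)) by (apply Rmult_le_compat_l; lra).
  assert (Q * D <= Q * D * k) by (assert (0 <= Q * D) by nra; nra).
  assert (eps * P < (2 + D) * Q) by (apply Rmult_lt_reg_l with k; nra).
  replace ((2 + D) / eps * Q) with ((2 + D) * Q / eps) by (field; lra).
  apply Rle_div_r; lra.
Qed.

Lemma Rmax_gt0 a b : 0 < a -> 0 < Rmax a b.
Proof. intros; apply Rlt_le_trans with a; [lra|apply Rmax_l]. Qed.

Lemma inv_le_of_sq_le x y r A :
  0 < x -> x <= y -> 0 < r -> y ^ 2 <= A * r -> / r <= A / x * / y.
Proof.
  intros x_gt0 x_le_y r_gt0 sq_le.
  assert (0 < x * y * r) by (apply Rmult_lt_0_compat; [apply Rmult_lt_0_compat|]; lra).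
  apply Rmult_le_reg_l with (x * y * r); [lra|].
  replace (x * y * r * / r) with (x * y) by (field; lra).
  replace (x * y * r * (A / x * / y)) with (A * r) by (field; lra).
  nra.
Qed.

Section WeightSequence.

Variable rho : nat -> R.
Hypothesis rho_weight : weight_seq rho.
Hypothesis rho_summable : ex_series (fun k => / rho k).

Lemma weight_ge1 k : 1 <= rho k.
Proof.
  destruct rho_weight as [rho0 [rho_step _]].
  induction k as [|k IHk]; [lra|specialize (rho_step k); lra].
Qed.

Lemma weight_le k l : (k <= l)%nat -> rho k <= rho l.
Proof.
  destruct rho_weight as [_ [rho_step _]].
  induction 1 as [|l _ IHl]; [lra|specialize (rho_step l); lra].
Qed.

Lemma weight_inv_gt0 k : 0 < / rho k.
Proof. apply Rinv_0_lt_compat; pose proof (weight_ge1 k); lra. Qed.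

Lemma ex_series_tail k : ex_series (fun n => / rho (k + n)%nat).
Proof. exact (proj1 (ex_series_incr_n _ k) rho_summable). Qed.

Lemma tail_sum_S k : tail_sum rho k = / rho k + tail_sum rho (S k).
Proof.
  unfold tail_sum; rewrite Series_incr_1 by apply ex_series_tail.
  rewrite Nat.add_0_r; f_equal; apply Series_ext; intros n.
  now rewrite Nat.add_succ_comm.
Qed.

Lemma tail_sum_ge0 k : 0 <= tail_sum rho k.
Proof.
  unfold tail_sum; apply Rle_trans with (sum_n (fun n => / rho (k + n)%nat) 0).
  - rewrite sum_O; left; apply weight_inv_gt0.
  - apply sum_n_le_Series; [apply ex_series_tail|intros n; left; apply weight_inv_gt0].
Qed.

Lemma tail_sum_le k l : (k <= l)%nat -> tail_sum rho l <= tail_sum rho k.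
Proof.
  induction 1 as [|l _ IHl]; [lra|].
  rewrite tail_sum_S in IHl; pose proof (weight_inv_gt0 l); lra.
Qed.

Lemma tail_sum_le_shift k n : tail_sum rho k <= INR n / rho k + tail_sum rho (k + n).
Proof.
  induction n as [|n IHn].
  - rewrite Nat.add_0_r; simpl; unfold Rdiv; lra.
  - rewrite Nat.add_succ_r, S_INR.
    rewrite (tail_sum_S (k + n)) in IHn.
    assert (/ rho (k + n)%nat <= / rho k).
    { apply Rinv_le_contravar; [pose proof (weight_ge1 k); lra|apply weight_le; lia]. }
    unfold Rdiv in *; rewrite Rmult_plus_distr_r, Rmult_1_l; lra.
Qed.

Lemma tau_w_gt0 k : (1 <= k)%nat -> 0 < tau_w rho k.
Proof.
  intros k_ge1; unfold tau_w, Rdiv.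
  pose proof (tail_sum_ge0 k); pose proof (weight_inv_gt0 k).
  assert (0 < INR k) by (apply lt_0_INR; lia).
  nra.
Qed.

Lemma sigma_w_le k : (1 <= k)%nat -> sigma_w rho k <= tau_w rho 1 * rho k.
Proof.
  intros k_ge1; destruct k as [|k]; [lia|].
  change (sigma_w rho (S k)) with (tau_w rho 1 * INR (S k) / tau_w rho (S k)).
  pose proof (tau_w_gt0 1 (le_n 1)); pose proof (tau_w_gt0 (S k) k_ge1).
  pose proof (weight_ge1 (S k)); pose proof (tail_sum_ge0 (S k)).
  unfold Rdiv; rewrite Rmult_assoc; apply Rmult_le_compat_l; [lra|].
  apply Rmult_le_reg_l with (tau_w rho (S k)); [lra|].
  rewrite <- Rmult_assoc, Rinv_r_simpl_m by lra.
  unfold tau_w; field_simplify; [nra|lra].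
Qed.

Lemma tau_w_le_of_tail_sum_le i x D : (1 <= i)%nat -> 0 < x -> x <= rho i -> 0 <= D ->
  x * tail_sum rho i <= 1 + D -> x * tau_w rho i <= (2 + D) * INR i.
Proof.
  intros i_ge1 x_gt0 x_le D_ge0 tail_le.
  assert (1 <= INR i) by (apply (le_INR 1); lia).
  assert (x / rho i <= 1) by (apply (Rdiv_le_1 x); lra).
  unfold tau_w.
  replace (x * (INR i / rho i + tail_sum rho i)) with (INR i * (x / rho i) + x * tail_sum rho i)
    by (field; lra).
  assert (INR i * (x / rho i) <= INR i) by nra.
  assert (D <= D * INR i) by nra.
  lra.
Qed.

Lemma sigma_w_ge_of_tau_w_le k x K : (1 <= k)%nat -> 0 < K ->
  x * tau_w rho k <= K * INR k -> tau_w rho 1 * x <= K * sigma_w rho k.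
Proof.
  intros k_ge1 K_gt0 tau_le; destruct k as [|k]; [lia|].
  change (sigma_w rho (S k)) with (tau_w rho 1 * INR (S k) / tau_w rho (S k)).
  pose proof (tau_w_gt0 1 (le_n 1)); pose proof (tau_w_gt0 (S k) k_ge1).
  apply Rmult_le_reg_r with (tau_w rho (S k)); [lra|].
  replace (K * (tau_w rho 1 * INR (S k) / tau_w rho (S k)) * tau_w rho (S k))
    with (tau_w rho 1 * (K * INR (S k))) by (field; lra).
  rewrite Rmult_assoc; apply Rmult_le_compat_l; lra.
Qed.

Lemma Mseq_ge1 j : 1 <= Mseq rho j.
Proof.
  induction j as [|j IHj]; simpl; [apply weight_ge1|].
  pose proof (weight_ge1 (S j)); nra.
Qed.

Lemma Mseq_ge_pow h j : rho h ^ (j + 1 - h) <= Mseq rho j.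
Proof.
  pose proof (weight_ge1 h) as rho_h.
  induction j as [|j IHj]; simpl Mseq.
  - destruct h; simpl; [lra|].
    replace (0 + 1 - S h)%nat with 0%nat by lia; simpl; pose proof (weight_ge1 0); lra.
  - pose proof (weight_ge1 (S j)); pose proof (Mseq_ge1 j).
    destruct (Compare_dec.le_lt_dec h (S j)) as [h_le|h_gt].
    + replace (S j + 1 - h)%nat with (S (j + 1 - h)) by lia; simpl pow.
      pose proof (weight_le h (S j) h_le); pose proof (pow_le (rho h) (j + 1 - h) ltac:(lra)).
      rewrite Rmult_comm; apply Rmult_le_compat; lra.
    + replace (S j + 1 - h)%nat with 0%nat by lia; simpl; nra.
Qed.

Lemma Mseq_root_sq_ge h j : (1 <= j)%nat -> (2 * h <= j + 1)%nat ->
  rho h <= Rpower (Mseq rho j) (/ INR j) ^ 2.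
Proof.
  intros j_ge1 h_le.
  pose proof (weight_ge1 h) as rho_h; pose proof (Mseq_ge1 j) as M_ge1.
  assert (j_gt0 : 0 < INR j) by (apply lt_0_INR; lia).
  assert (exponent_ge1 : 1 <= INR (j + 1 - h) * (/ INR j + / INR j)).
  { assert (double : INR j <= 2 * INR (j + 1 - h)).
    { replace 2 with (INR 2) by (simpl; lra); rewrite <- mult_INR; apply le_INR; lia. }
    apply Rmult_le_reg_l with (INR j); [lra|].
    field_simplify; [lra|lra]. }
  simpl pow; rewrite Rmult_1_r, <- Rpower_plus.
  rewrite <- (Rpower_1 (rho h)) at 1 by lra.
  apply Rle_trans with (Rpower (rho h) (INR (j + 1 - h) * (/ INR j + / INR j))).
  { apply Rle_Rpower; lra. }
  rewrite <- Rpower_mult, Rpower_pow by lra.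
  apply Rle_Rpower_l; [pose proof (Rinv_0_lt_compat _ j_gt0); lra|].
  split; [apply pow_lt; lra|apply Mseq_ge_pow].
Qed.

End WeightSequence.

Lemma tail_sum_double_le rho nu A m :
  weight_seq rho -> weight_seq nu -> ex_series (fun k => / rho k) -> ex_series (fun k => / nu k) ->
  (forall n, nu n ^ 2 <= A * rho (2 * n)%nat) ->
  tail_sum rho (2 * m) <= 2 * A * tail_sum nu m / nu m.
Proof.
  intros rho_weight nu_weight rho_summable nu_summable sq_le.
  pose proof (weight_ge1 nu nu_weight m).
  replace (2 * A * tail_sum nu m / nu m) with (2 * Series (fun n => A / nu m * / nu (m + n)%nat))
    by (rewrite Series_scal_l; unfold tail_sum; field; lra).
  apply Series_le_twice_even.
  - now apply ex_series_tail.
  - exact (ex_series_scal_l (A / nu m) _ (ex_series_tail nu nu_summable m)).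
  - intros n; left; now apply weight_inv_gt0.
  - intros n; pose proof (weight_ge1 rho rho_weight (2 * m + n)).
    apply Rinv_le_contravar; [lra|apply weight_le; [exact rho_weight|lia]].
  - intros n; replace (2 * m + 2 * n)%nat with (2 * (m + n))%nat by lia.
    pose proof (weight_ge1 rho rho_weight (2 * (m + n))).
    apply inv_le_of_sq_le; [lra|apply weight_le; [exact nu_weight|lia]|lra|apply sq_le].
Qed.

Lemma tail_sum_le_of_sq rho nu A C x k h :
  weight_seq rho -> weight_seq nu -> ex_series (fun k => / rho k) -> ex_series (fun k => / nu k) ->
  0 <= A -> (forall n, nu n ^ 2 <= A * rho (2 * n)%nat) ->
  (k <= 2 * h)%nat -> 0 < x -> x <= rho k -> x <= C * nu h ->
  x * tail_sum rho k <= INR (2 * h - k) + 2 * A * C * tail_sum nu 0.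
Proof.
  intros rho_weight nu_weight rho_summable nu_summable A_ge0 sq_le k_le x_gt0 x_le_rho x_le_nu.
  pose proof (tail_sum_le_shift rho rho_weight rho_summable k (2 * h - k)) as shift.
  replace (k + (2 * h - k))%nat with (2 * h)%nat in shift by lia.
  pose proof (tail_sum_double_le rho nu A h rho_weight nu_weight rho_summable nu_summable sq_le).
  pose proof (tail_sum_le nu nu_weight nu_summable 0 h (Nat.le_0_l h)).
  pose proof (tail_sum_ge0 nu nu_weight nu_summable h).
  pose proof (weight_ge1 nu nu_weight h); pose proof (pos_INR (2 * h - k)).
  assert (x / rho k <= 1) by (apply (Rdiv_le_1 x (rho k)); lra).
  assert (x / nu h <= C) by (apply (Rle_div_l x C (nu h)); lra).
  apply Rle_trans with (x / rho k * INR (2 * h - k) + x / nu h * (2 * A * tail_sum nu h)).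
  { unfold Rdiv in *; nra. }
  apply Rplus_le_compat; [nra|].
  replace (2 * A * C * tail_sum nu 0) with (C * (2 * A * tail_sum nu 0)) by ring.
  apply Rmult_le_compat; [left; apply Rdiv_lt_0_compat; lra|nra|lra|nra].
Qed.

Lemma Sseq_ge_pow_Mseq rho nu c j : weight_seq rho -> 0 <= c ->
  (forall i, (1 <= i)%nat -> c * rho i <= sigma_w nu i) -> c ^ j * Mseq rho j <= Sseq nu j.
Proof.
  intros rho_weight c_ge0 sigma_ge.
  induction j as [|j IHj]; simpl; [rewrite (proj1 rho_weight); lra|].
  pose proof (Mseq_ge1 rho rho_weight j); pose proof (weight_ge1 rho rho_weight (S j)).
  pose proof (pow_le c j c_ge0).
  replace (c * c ^ j * (Mseq rho j * rho (S j)))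
    with (c ^ j * Mseq rho j * (c * rho (S j))) by ring.
  apply Rmult_le_compat; [nra|nra|exact IHj|apply sigma_ge; lia].
Qed.

Lemma Sseq_root_ge rho nu c j : weight_seq rho -> 0 < c ->
  (forall i, (1 <= i)%nat -> c * rho i <= sigma_w nu i) -> (1 <= j)%nat ->
  c * Rpower (Mseq rho j) (/ INR j) <= Rpower (Sseq nu j) (/ INR j).
Proof.
  intros rho_weight c_gt0 sigma_ge j_ge1.
  pose proof (Sseq_ge_pow_Mseq rho nu c j rho_weight ltac:(lra) sigma_ge) as S_ge.
  pose proof (Mseq_ge1 rho rho_weight j); pose proof (pow_lt c j c_gt0).
  assert (j_gt0 : 0 < INR j) by (apply lt_0_INR; lia).
  replace c with (Rpower (c ^ j) (/ INR j)) at 1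
    by (rewrite <- Rpower_pow, Rpower_mult, Rinv_r, Rpower_1 by lra; reflexivity).
  rewrite Rpower_mult_distr by lra.
  apply Rle_Rpower_l; [left; apply Rinv_0_lt_compat; lra|split; [nra|exact S_ge]].
Qed.

Section WeightMatrix.

Variable mu : R -> nat -> R.
Hypothesis mu_weight : forall a, 0 < a -> weight_seq (mu a).
Hypothesis mu_summable : forall a, 0 < a -> ex_series (fun k => / mu a k).
Hypothesis mu_le : forall a b, 0 < a -> a <= b -> forall k, mu a k <= mu b k.
Hypothesis mu_liminf_double : forall a, 0 < a -> exists b, 0 < b /\
  Rbar_lt 0 (LimInf_seq (fun k => mu b k / INR k * tail_sum (mu a) (2 * k)%nat)).
Hypothesis mu_sq_le : forall a, 0 < a -> exists b A, 0 < b /\ 1 <= A /\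
  forall j : nat, mu a j ^ 2 <= A * mu b (2 * j)%nat.

Lemma mu_le_Rmax_l a b k : 0 < a -> mu a k <= mu (Rmax a b) k.
Proof. intros; apply mu_le; [lra|apply Rmax_l]. Qed.

Lemma mu_le_Rmax_r a b k : 0 < b -> mu b k <= mu (Rmax a b) k.
Proof. intros; apply mu_le; [lra|apply Rmax_r]. Qed.

Lemma mu_double_le a : 0 < a ->
  exists b C, 0 < b /\ 1 <= C /\ forall k, mu a (2 * k)%nat <= C * mu b k.
Proof.
  intros a_gt0.
  destruct (mu_sq_le a a_gt0) as (a1 & A & a1_gt0 & A_ge1 & sq_le).
  assert (a'_gt0 : 0 < Rmax a a1) by now apply Rmax_gt0.
  destruct (mu_liminf_double _ a'_gt0) as (b & b_gt0 & liminf_gt0).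
  destruct (LimInf_seq_gt0_eventually _ liminf_gt0) as (eps & eps_gt0 & N & liminf_ev).
  set (D := 2 * A * 1 * tail_sum (mu a) 0).
  assert (D_ge0 : 0 <= D).
  { pose proof (tail_sum_ge0 _ (mu_weight a a_gt0) (mu_summable a a_gt0) 0); unfold D; nra. }
  assert (sq_le' : forall n, mu a n ^ 2 <= A * mu (Rmax a a1) (2 * n)%nat).
  { intros n; pose proof (mu_le_Rmax_r a a1 (2 * n) a1_gt0); specialize (sq_le n); nra. }
  assert (eventually_le :
    forall k, (max N 1 <= k)%nat -> mu a (2 * k)%nat <= (2 + D) / eps * mu b k).
  { intros k k_ge.
    pose proof (weight_ge1 _ (mu_weight a a_gt0) (2 * k)).
    assert (tail_le : mu a (2 * k)%nat * tail_sum (mu (Rmax a a1)) (2 * k) <= INR (2 * k) + D).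
    { replace (2 * k)%nat with (2 * (2 * k) - 2 * k)%nat at 3 by lia.
      pose proof (mu_le_Rmax_l a a1 (2 * k) a_gt0).
      apply tail_sum_le_of_sq with (nu := mu a) (h := (2 * k)%nat); auto; lra || lia. }
    replace (INR (2 * k)) with (2 * INR k) in tail_le by (rewrite mult_INR; simpl; lra).
    apply le_mul_of_lt_ratio with (k := INR k) (t := tail_sum (mu (Rmax a a1)) (2 * k)); auto.
    - apply (le_INR 1); lia.
    - lra.
    - pose proof (weight_ge1 _ (mu_weight b b_gt0) k); lra.
    - apply tail_sum_ge0; auto.
    - apply (liminf_ev k); lia. }
  exists b, (Rmax ((2 + D) / eps) (mu a (2 * max N 1)%nat)).
  pose proof (weight_ge1 _ (mu_weight a a_gt0) (2 * max N 1)).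
  split; [exact b_gt0|split].
  - apply Rle_trans with (mu a (2 * max N 1)%nat); [lra|apply Rmax_r].
  - apply (le_mul_of_eventually_le (fun k => mu a (2 * k)%nat)); [|lra| |exact eventually_le].
    + intros k k_le; apply (weight_le _ (mu_weight a a_gt0)); lia.
    + exact (weight_ge1 _ (mu_weight b b_gt0)).
Qed.

Lemma sigma_w_ge_mu g : 0 < g ->
  exists b c, 0 < b /\ 0 < c /\ forall i, (1 <= i)%nat -> c * mu g i <= sigma_w (mu b) i.
Proof.
  intros g_gt0.
  destruct (mu_double_le g g_gt0) as (d & C & d_gt0 & C_ge1 & double_le).
  destruct (mu_sq_le d d_gt0) as (b0 & A & b0_gt0 & A_ge1 & sq_le).
  assert (b_gt0 : 0 < Rmax b0 g) by now apply Rmax_gt0.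
  set (D := 2 * A * C * tail_sum (mu d) 0).
  assert (D_ge0 : 0 <= D).
  { pose proof (tail_sum_ge0 _ (mu_weight d d_gt0) (mu_summable d d_gt0) 0).
    unfold D; apply Rmult_le_pos; [nra|assumption]. }
  set (t1 := tau_w (mu (Rmax b0 g)) 1).
  assert (t1_gt0 : 0 < t1) by (apply tau_w_gt0; auto).
  exists (Rmax b0 g), (t1 / (2 + D)).
  split; [exact b_gt0|split; [apply Rdiv_lt_0_compat; lra|]].
  intros i i_ge1.
  destruct (exists_half i) as (h & i_le & h_le).
  pose proof (weight_ge1 _ (mu_weight g g_gt0) i) as x_ge1.
  assert (x_le : mu g i <= mu (Rmax b0 g) i) by now apply mu_le_Rmax_r.
  assert (tail_le : mu g i * tail_sum (mu (Rmax b0 g)) i <= INR (2 * h - i) + D).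
  { apply tail_sum_le_of_sq with (nu := mu d); auto; try lra.
    - intros n; specialize (sq_le n); pose proof (mu_le_Rmax_l b0 g (2 * n) b0_gt0); nra.
    - apply Rle_trans with (mu g (2 * h)%nat); [apply weight_le; auto|apply double_le]. }
  assert (tau_le : mu g i * tau_w (mu (Rmax b0 g)) i <= (2 + D) * INR i).
  { assert (INR (2 * h - i) <= 1) by (apply (le_INR _ 1); lia).
    apply tau_w_le_of_tail_sum_le; auto; lra. }
  pose proof (sigma_w_ge_of_tau_w_le _ (mu_weight _ b_gt0) (mu_summable _ b_gt0)
                i (mu g i) (2 + D) i_ge1 ltac:(lra) tau_le) as sigma_ge.
  replace (t1 / (2 + D) * mu g i) with (t1 * mu g i / (2 + D)) by (field; lra).
  apply Rle_div_l; [lra|rewrite (Rmult_comm (sigma_w _ i)); exact sigma_ge].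
Qed.

Lemma mu_sq_le_half a : 0 < a ->
  exists g K, 0 < g /\ 1 <= K /\ forall j h, (j <= 2 * h)%nat -> mu a j ^ 2 <= K * mu g h.
Proof.
  intros a_gt0.
  destruct (mu_sq_le a a_gt0) as (d & A & d_gt0 & A_ge1 & sq_le).
  destruct (mu_double_le d d_gt0) as (e & C1 & e_gt0 & C1_ge1 & d_le).
  destruct (mu_double_le e e_gt0) as (g & C2 & g_gt0 & C2_ge1 & e_le).
  assert (AC1_ge1 : 1 <= A * C1) by nra.
  exists g, (A * C1 * C2); split; [exact g_gt0|split; [nra|]].
  intros j h j_le.
  apply Rle_trans with (A * mu d (2 * j)%nat); [apply sq_le|].
  apply Rle_trans with (A * (C1 * mu e j)); [apply Rmult_le_compat_l; [lra|apply d_le]|].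
  rewrite <- Rmult_assoc.
  apply Rle_trans with (A * C1 * mu e (2 * h)%nat).
  { apply Rmult_le_compat_l; [lra|apply (weight_le _ (mu_weight e e_gt0)); exact j_le]. }
  rewrite (Rmult_assoc (A * C1)); apply Rmult_le_compat_l; [lra|apply e_le].
Qed.

Lemma mu_le_root_Sseq a : 0 < a ->
  exists b C, 0 < b /\ 0 <= C /\
    forall j, (1 <= j)%nat -> mu a j <= C * Rpower (Sseq (mu b) j) (/ INR j).
Proof.
  intros a_gt0.
  destruct (mu_sq_le_half a a_gt0) as (g & K & g_gt0 & K_ge1 & sq_le_half).
  destruct (sigma_w_ge_mu g g_gt0) as (b & c & b_gt0 & c_gt0 & sigma_ge).
  exists b, (K / c); split; [exact b_gt0|split; [left; apply Rdiv_lt_0_compat; lra|]].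
  intros j j_ge1.
  destruct (exists_half j) as (h & j_le & h_le).
  pose proof (sq_le_half j h j_le).
  pose proof (Mseq_root_sq_ge _ (mu_weight g g_gt0) h j j_ge1 h_le).
  pose proof (Sseq_root_ge _ (mu b) c j (mu_weight g g_gt0) c_gt0 sigma_ge j_ge1).
  set (M := Rpower (Mseq (mu g) j) (/ INR j)) in *.
  set (S := Rpower (Sseq (mu b) j) (/ INR j)) in *.
  assert (M_gt0 : 0 < M) by apply exp_pos.
  assert (KM_le : K * M <= K / c * S).
  { replace (K * M) with (K / c * (c * M)) by (field; lra).
    apply Rmult_le_compat_l; [left; apply Rdiv_lt_0_compat|]; lra. }
  assert (K * mu g h <= K * M ^ 2) by (apply Rmult_le_compat_l; lra).
  assert (K * M ^ 2 <= (K * M) ^ 2) by (assert (0 <= M ^ 2) by nra; nra).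
  assert ((K * M) ^ 2 <= (K / c * S) ^ 2) by (apply pow_incr; nra).
  apply Rsqr_incr_0_var; [rewrite !Rsqr_pow2; lra|nra].
Qed.

End WeightMatrix.

Theorem lemma4p7 (mu : R -> nat -> R) :
  weight_matrix mu ->
  nonquasianalytic_matrix mu ->
  (forall a b, 0 < a -> a <= b -> forall k, mu a k <= mu b k) ->
  (forall a, 0 < a -> exists b, 0 < b /\
     Rbar_lt 0 (LimInf_seq (fun k => mu b k / INR k * tail_sum (mu a) (2 * k)%nat))) ->
  (forall a, 0 < a -> exists b A, 0 < b /\ 1 <= A /\
     forall j : nat, (mu a j) ^ 2 <= A * mu b (2 * j)%nat) ->
  (forall a, 0 < a -> exists b, 0 < b /\
     Rbar_lt 0 (LimInf_seq (fun k => mu b k / INR k * tail_sum (mu a) k)))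
  /\
  (forall a, 0 < a -> exists b A, 0 < b /\ 1 <= A /\
     forall j : nat, (1 <= j)%nat ->
       sigma_w (mu a) j <= A * Rpower (Sseq (mu b) j) (/ INR j)).
Proof.
  intros [mu_weight _] mu_summable mu_le mu_liminf_double mu_sq_le; split.
  - intros a a_gt0.
    destruct (mu_liminf_double a a_gt0) as (b & b_gt0 & liminf_gt0).
    exists b; split; [exact b_gt0|].
    eapply Rbar_lt_le_trans; [exact liminf_gt0|].
    apply LimInf_le; exists 1%nat; intros k k_ge1.
    pose proof (weight_ge1 _ (mu_weight b b_gt0) k).
    assert (0 < INR k) by (apply lt_0_INR; lia).
    apply Rmult_le_compat_l; [left; apply Rdiv_lt_0_compat; lra|].
    apply tail_sum_le; [now apply mu_weight|now apply mu_summable|lia].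
  - intros a a_gt0.
    destruct (mu_le_root_Sseq mu mu_weight mu_summable mu_le mu_liminf_double mu_sq_le a a_gt0)
      as (b & C & b_gt0 & C_ge0 & mu_le_root).
    set (t1 := tau_w (mu a) 1).
    assert (t1_gt0 : 0 < t1) by (apply tau_w_gt0; [now apply mu_weight|now apply mu_summable|lia]).
    exists b, (Rmax 1 (t1 * C)); split; [exact b_gt0|split; [apply Rmax_l|]].
    intros j j_ge1.
    pose proof (mu_le_root j j_ge1).
    assert (0 < Rpower (Sseq (mu b) j) (/ INR j)) by apply exp_pos.
    pose proof (Rmax_r 1 (t1 * C)).
    apply Rle_trans with (t1 * mu a j).
    { apply sigma_w_le; [now apply mu_weight|now apply mu_summable|exact j_ge1]. }
    apply Rle_trans with (t1 * C * Rpower (Sseq (mu b) j) (/ INR j));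
      [|apply Rmult_le_compat_r; lra].
    rewrite Rmult_assoc; apply Rmult_le_compat_l; lra.
Qed.
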